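(* Let $(E,\mathcal{P})$ be a random locally convex module over $K$ with base $(\Omega,\mathcal{F},P)$. Then $E^{\ast}_{max}=E^{\ast}_{\varepsilon,\lambda}$; that is, a module homomorphism $f:E\to L^{0}(\mathcal{F},K)$ is continuous from $(E,\mathcal{T}_{c})$ to $(L^{0}(\mathcal{F},K),\mathcal{T}_{\varepsilon,\lambda})$ if and only if it is continuous from $(E,\mathcal{T}_{\varepsilon,\lambda})$ to $(L^{0}(\mathcal{F},K),\mathcal{T}_{\varepsilon,\lambda})$.
   Context: $(\Omega,\mathcal{F},P)$ is a probability space, $K=\mathbb{R}$ or $\mathbb{C}$, and $L^{0}(\mathcal{F},K)$ is the algebra of equivalence classes (modulo a.s. equality) of $K$-valued measurable random variables. $L^0(\mathcal F,\mathbb R)$ is ordered by $\xi\le\eta$ iff $\xi^0\le\eta^0$ a.s. for representatives; $L^{0}_{+}=\{\xi\in L^0(\mathcal F,\mathbb R):\xi\ge 0\}$, $L^{0}_{++}=\{\xi: \xi>0 \text{ a.s. on }\Omega\}$; $|\xi|$ is the pointwise absolute value. An $L^0$-seminorm on a left $L^0(\mathcal F,K)$-module $E$ is a map $\|\cdot\|:E\to L^0_+$ with $\|x+y\|\le\|x\|+\|y\|$ and $\|\xi x\|=|\xi|\,\|x\|$ for all $\xi\in L^0(\mathcal F,K)$, $x,y\in E$. A random locally convex module over $K$ with base $(\Omega,\mathcal F,P)$ is a pair $(E,\mathcal P)$ where $E$ is a left $L^0(\mathcal F,K)$-module and $\mathcal P$ is a family of $L^0$-seminorms on $E$ such that $\bigvee\{\|x\|:\|\cdot\|\in\mathcal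 P\}=0$ implies $x=0$. $\mathcal F(\mathcal P)$ denotes the set of finite subfamilies of $\mathcal P$, and for $\mathcal Q\in\mathcal F(\mathcal P)$, $\|x\|_{\mathcal Q}=\bigvee\{\|x\|:\|\cdot\|\in\mathcal Q\}$. The $(\varepsilon,\lambda)$-topology $\mathcal T_{\varepsilon,\lambda}$ on $E$ is the linear topology with local base at $0$ given by the sets $\{x\in E: P\{\omega:\|x\|_{\mathcal Q}(\omega)<\varepsilon\}>1-\lambda\}$, $\mathcal Q\in\mathcal F(\mathcal P)$, $\varepsilon>0$, $0<\lambda<1$. The locally $L^0$-convex topology $\mathcal T_c$ on $E$: $G\subset E$ is open iff for every $x\in G$ there are $\mathcal Q\in\mathcal F(\mathcal P)$ and $\varepsilon\in L^0_{++}$ with $x+\{y:\|y\|_{\mathcal Q}\le\varepsilon\}\subset G$. $L^0(\mathcal F,K)$ itself is regarded as a random locally convex module with $\mathcal P=\{|\cdot|\}$; then $\mathcal T_{\varepsilon,\lambda}$ on it is the topology of convergence in probability. Module homomorphism means $L^0(\mathcal F,K)$-linear map. $E^\ast_{\varepsilon,\lambda}$ is the set of module homomorphisms $f:E\to L^0(\mathcal F,K)$ continuous from $(E,\mathcal T_{\varepsilon,\lambda})$ to $(L^0(\mathcal F,K),\mathcal T_{\varepsilon,\lambda})$; $E^\ast_{max}$ is the set of module homomorphisms continuous from $(E,\mathcal T_{c})$ to $(L^0(\mathcal F,K),\mathcal T_{\varepsilon,\lambda})$. *)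

From HB Require Import structures.
From mathcomp Require Import all_boot all_algebra.
From mathcomp Require Import all_classical all_reals all_analysis.
From mathcomp Require Import complex.
From Stdlib Require List.
Set Implicit Arguments. Unset Strict Implicit. Unset Printing Implicit Defensive.
Import GRing.Theory Num.Theory.
Local Open Scope classical_set_scope.
Local Open Scope ring_scope.

(* L^0(F,K) is encoded through representatives: an element of L^0(F,K) is a
   K-valued function on Omega that is measurable ([Kmeas]); two representatives
   denote the same class iff they agree P-a.s.  All equalities/inequalities in
   L^0 are therefore stated a.s. on representatives. *)

Section RLC.
Context (R : realType) (d : measure_display) (T : measurableType d)
        (P : probability T R).
Context (K : comNzRingType) (Kmeas : (T -> K) -> Prop) (Knorm : K -> R).

Definition aeqK (xi eta : T -> K) : Prop := {ae P, forall w, xi w = eta w}.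

Record L0_module (E : zmodType) (sc : (T -> K) -> E -> E) : Prop := {
  sc_ae : forall xi eta x, Kmeas xi -> Kmeas eta -> aeqK xi eta ->
     sc xi x = sc eta x;
  scDl : forall xi eta x, Kmeas xi -> Kmeas eta ->
     sc (fun w => xi w + eta w) x = sc xi x + sc eta x;
  scDr : forall xi x y, Kmeas xi -> sc xi (x + y) = sc xi x + sc xi y;
  scA : forall xi eta x, Kmeas xi -> Kmeas eta ->
     sc (fun w => xi w * eta w) x = sc xi (sc eta x);
  sc1 : forall x, sc (fun _ => 1) x = x }.

Record L0_seminorm (E : zmodType) (sc : (T -> K) -> E -> E)
    (p : E -> T -> R) : Prop := {
  sn_meas : forall x, measurable_fun setT (p x);
  sn_ge0 : forall x, {ae P, forall w, 0 <= p x w};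
  sn_triangle : forall x y, {ae P, forall w, p (x + y) w <= p x w + p y w};
  sn_hom : forall xi x, Kmeas xi ->
     {ae P, forall w, p (sc xi x) w = Knorm (xi w) * p x w} }.

Definition is_L0_sup (S : set (T -> R)) (s : T -> R) : Prop :=
  measurable_fun setT s /\
  (forall g, S g -> {ae P, forall w, g w <= s w}) /\
  (forall u, measurable_fun setT u ->
     (forall g, S g -> {ae P, forall w, g w <= u w}) ->
     {ae P, forall w, s w <= u w}).

Record RLC_module (E : zmodType) (sc : (T -> K) -> E -> E)
    (Pf : set (E -> T -> R)) : Prop := {
  rlc_module : L0_module sc;
  rlc_seminorms : forall p, Pf p -> L0_seminorm sc p;
  rlc_sep : forall x, is_L0_sup [set p x | p in Pf] (fun _ => 0) -> x = 0 }.

Definition lte_prob (r : R) (A : set T) : Prop := (r%:E < P A)%E.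

Section Topologies.
Context (E : zmodType) (sc : (T -> K) -> E -> E) (Pf : set (E -> T -> R)).

Definition finite_subfamily (Q : seq (E -> T -> R)) : Prop :=
  forall p, List.In p Q -> Pf p.

(* ||x||_Q = \/ { ||x|| : ||.|| in Q }  (finite supremum = pointwise max) *)
Definition normQ (Q : seq (E -> T -> R)) (x : E) (w : T) : R :=
  \big[Num.max/0]_(p <- Q) p x w.

Definition el_open (G : set E) : Prop :=
  forall x, G x -> exists Q, finite_subfamily Q /\
    exists eps : R, 0 < eps /\ exists lam : R, 0 < lam < 1 /\
      forall y, lte_prob (1 - lam) [set w | normQ Q (y - x) w < eps] -> G y.

Definition c_open (G : set E) : Prop :=
  forall x, G x -> exists Q, finite_subfamily Q /\
    exists eps : T -> R, measurable_fun setT eps /\ {ae P, forall w, 0 < eps w} /\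
      forall y, {ae P, forall w, normQ Q (y - x) w <= eps w} -> G y.

End Topologies.

(* open sets of the (eps,lambda)-topology (convergence in probability) on
   L^0(F,K), P = {|.|}; a set of classes is given as a set of representatives
   (only its measurable members matter) *)
Definition L0_el_open (G : set (T -> K)) : Prop :=
  forall xi, Kmeas xi -> G xi ->
    exists eps : R, 0 < eps /\ exists lam : R, 0 < lam < 1 /\
      forall eta, Kmeas eta ->
        lte_prob (1 - lam) [set w | Knorm (eta w - xi w) < eps] -> G eta.

Section Duals.
Context (E : zmodType) (sc : (T -> K) -> E -> E) (Pf : set (E -> T -> R)).

Definition L0_module_hom (f : E -> T -> K) : Prop :=
  (forall x, Kmeas (f x)) /\
  (forall x y, aeqK (f (x + y)) (fun w => f x w + f y w)) /\
  (forall xi x, Kmeas xi -> aeqK (f (sc xi x)) (fun w => xi w * f x w)).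

Definition cont_el (f : E -> T -> K) : Prop :=
  forall G, L0_el_open G -> el_open Pf [set x | G (f x)].

Definition cont_c (f : E -> T -> K) : Prop :=
  forall G, L0_el_open G -> c_open Pf [set x | G (f x)].

End Duals.

Definition dual_equality_statement : Prop :=
  forall (E : zmodType) (sc : (T -> K) -> E -> E) (Pf : set (E -> T -> R)),
    RLC_module sc Pf ->
    forall f : E -> T -> K, L0_module_hom sc f ->
      (cont_c Pf f <-> cont_el Pf f).

End RLC.

Definition measR (R : realType) (d : measure_display) (T : measurableType d)
  (xi : T -> R) : Prop := measurable_fun setT xi.

Definition measC (R : realType) (d : measure_display) (T : measurableType d)
  (xi : T -> R[i]) : Prop :=
  measurable_fun setT (fun w => complex.Re (xi w)) /\
  measurable_fun setT (fun w => complex.Im (xi w)).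

Definition absC (R : realType) (z : R[i]) : R :=
  Num.sqrt (complex.Re z ^+ 2 + complex.Im z ^+ 2).

(* Every (eps,lambda)-open set is T_c-open, since a constant eps is an
   admissible random radius; hence E^*_{eps,lambda} is contained in E^*_max.
   Conversely let f be T_c-continuous.  The set U of xi with
   P(|xi| < e0) > 1 - lambda for some e0 < 1 is an (eps,lambda)-open
   neighbourhood of 0, so f^-1(U) contains a T_c-ball {y : ||y||_Q <= eta}.
   For any z, on the event B where |f z| > 0 and ||z||_Q <= |f z| eta, the
   element (1_B / |f z|) z lies in that ball while f sends it to a random
   variable equal to 1 on B; so P(B) < lambda.  Off B, either |f z| is small,
   or ||z||_Q >= |f z| eta, and the latter has small probability as soon as
   ||z||_Q is small in probability and eta is bounded away from 0 with high
   probability.  By translation this gives (eps,lambda)-continuity of f. *)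

From HB Require Import structures.
From mathcomp Require Import all_boot all_algebra.
From mathcomp Require Import all_classical all_reals all_analysis.
From mathcomp Require Import complex.
From mathcomp Require Import measurable_realfun.
From mathcomp Require Import lra.
Set Implicit Arguments. Unset Strict Implicit. Unset Printing Implicit Defensive.
Import order.Order.TTheory GRing.Theory Num.Theory.
Local Open Scope classical_set_scope.
Local Open Scope ring_scope.

Section MeasurableReal.
Context (R : realType) (d : measure_display) (T : measurableType d).
Implicit Types g h : T -> R.

Lemma measurable_set_ltr g h : measurable_fun setT g -> measurable_fun setT h ->
  measurable [set w | g w < h w].
Proof.
move=> mg mh; have := measurable_fun_ltr mg mh measurableT (Y := [set true]) I.
by rewrite setTI preimage_true.
Qed.

Lemma measurable_set_ler g h : measurable_fun setT g -> measurable_fun setT h ->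
  measurable [set w | g w <= h w].
Proof.
move=> mg mh; have := measurable_fun_ler mg mh measurableT (Y := [set true]) I.
by rewrite setTI preimage_true.
Qed.

Lemma measurable_funV_ge0 g : measurable_fun setT g -> (forall w, 0 <= g w) ->
  measurable_fun setT (fun w => (g w)^-1).
Proof.
move=> mg g_ge0.
have -> : (fun w => (g w)^-1) = (fun w => if 0 < g w then (g w)^-1 else 0).
  apply/funext => w; case: ifPn => // g_ngt0.
  have -> : g w = 0 by apply/eqP; rewrite eq_le g_ge0 andbT leNgt.
  exact: invr0.
have mpos : measurable_fun setT (fun w => 0 < g w).
  exact: measurable_fun_ltr (measurable_cst (0 : R)) mg.
apply: measurable_fun_if => //.
apply: (@measurable_comp _ _ _ _ _ _ (`]0, +oo[%classic : set R) (@GRing.inv R)) => //.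
- by move=> _ [w [_ /= gw] <-]; rewrite in_itv /= andbT gw.
- apply: open_continuous_measurable_fun; first exact: interval_open.
  move=> x; rewrite inE /= in_itv /= andbT => x0.
  by apply: inv_continuous; rewrite gt_eqF.
- exact: measurable_funS mg.
Qed.

Lemma measurable_sqrt_sum_sqr g h : measurable_fun setT g -> measurable_fun setT h ->
  measurable_fun setT (fun w => Num.sqrt (g w ^+ 2 + h w ^+ 2)).
Proof.
move=> mg mh; apply: measurableT_comp.
  exact: (continuous_measurable_fun (@sqrt_continuous R)).
by apply: measurable_funD; apply: measurable_funX.
Qed.

End MeasurableReal.

Section RealProbability.
Context (R : realType) (d : measure_display) (T : measurableType d)
        (P : probability T R).

Definition pr (A : set T) : R := fine (P A).

Lemma prE A : measurable A -> P A = (pr A)%:E.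
Proof. by move=> mA; rewrite /pr fineK // fin_num_measure. Qed.

Lemma pr_le1 A : measurable A -> pr A <= 1.
Proof. by move=> mA; rewrite -lee_fin -prE // probability_le1. Qed.

Lemma prT : pr setT = 1.
Proof. by rewrite /pr probability_setT. Qed.

Lemma pr_le A B : measurable A -> measurable B -> A `<=` B -> pr A <= pr B.
Proof. by move=> mA mB AB; rewrite -lee_fin -!prE // le_measure // inE. Qed.

Lemma prC A : measurable A -> pr (~` A) = 1 - pr A.
Proof.
move=> mA; apply/eqP; rewrite -eqe -prE; last exact: measurableC.
by rewrite probability_setC // prE.
Qed.

Lemma prU A B : measurable A -> measurable B -> pr (A `|` B) <= pr A + pr B.
Proof.
move=> mA mB; rewrite -lee_fin -prE; last exact: measurableU.
by rewrite EFinD -!prE // measureU2.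
Qed.

Lemma prI A B : measurable A -> measurable B -> pr A + pr B - 1 <= pr (A `&` B).
Proof.
move=> mA mB; have := prU (measurableC mA) (measurableC mB).
by rewrite -setCI !prC //; [lra | exact: measurableI].
Qed.

Lemma lte_probP r A : measurable A -> lte_prob P r A <-> r < pr A.
Proof. by move=> mA; rewrite /lte_prob prE // lte_fin. Qed.

Lemma pr_le_ae A B : measurable A -> measurable B ->
  {ae P, forall w, A w -> B w} -> pr A <= pr B.
Proof.
move=> mA mB [N [mN N0 AB_N]].
have AB : A `<=` B `|` N.
  move=> w Aw; have [Bw|nBw] := pselect (B w); first by left.
  by right; apply: AB_N => /(_ Aw).
apply: le_trans (pr_le mA (measurableU _ _ mB mN) AB) _.
by apply: le_trans (prU mB mN) _; rewrite /pr N0 /= addr0.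
Qed.

Lemma pr_ae1 A : measurable A -> {ae P, forall w, A w} -> pr A = 1.
Proof.
move=> mA aeA; apply/eqP; rewrite eq_le pr_le1 //= -prT.
by apply: pr_le_ae => //; apply: filterS aeA.
Qed.

(* The events {eta >= 1/(n+1)} increase to an event of probability 1. *)
Lemma exists_pr_lt_small (eta : T -> R) (c : R) : measurable_fun setT eta ->
  {ae P, forall w, 0 < eta w} -> 0 < c ->
  exists delta : R, 0 < delta /\ pr [set w | eta w < delta] <= c.
Proof.
move=> meta eta_gt0 c_gt0.
pose F n := [set w | n.+1%:R^-1 <= eta w].
have mF n : measurable (F n) by apply: measurable_set_ler => //; exact: measurable_cst.
have mUF : measurable (\bigcup_n F n) by exact: bigcupT_measurable.
have F_nd : nondecreasing_seq F.
  move=> n m nm; apply/asboolP => w /=; apply: le_trans.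
  by rewrite lef_pV2 ?posrE ?ltr0n // ler_nat.
have UF1 : P (\bigcup_n F n) = 1%:E.
  rewrite prE // pr_ae1 //; apply: filterS eta_gt0 => w ew.
  have etaV_ge0 : 0 <= (eta w)^-1 by rewrite invr_ge0 ltW.
  exists (Num.Def.archi_bound (eta w)^-1) => //; rewrite /F /=.
  rewrite invf_ple ?posrE ?ltr0n //; apply/ltW/(lt_le_trans (archi_boundP _)) => //.
  by rewrite ler_nat.
have PF1 : (P \o F) x @[x --> \oo] --> (1%:E : \bar R).
  by rewrite -UF1; exact: nondecreasing_cvg_mu.
have [_ prF1] := (fine_cvgP _ _).1 PF1.
have [N _ prFN] := cvgr_gt _ prF1 (1 - c) ltac:(lra).
have /= prFN_gt := prFN N (leqnn N).
exists N.+1%:R^-1; split; first by rewrite invr_gt0 ltr0n.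
have sub : [set w | eta w < N.+1%:R^-1] `<=` ~` F N.
  by move=> w /= + FNw; rewrite ltNge FNw.
apply: le_trans (pr_le _ (measurableC (mF N)) sub) _.
  by apply: measurable_set_ltr => //; exact: measurable_cst.
by rewrite prC //; move: prFN_gt; rewrite /pr /=; lra.
Qed.

End RealProbability.

Section Duality.
Context (R : realType) (d : measure_display) (T : measurableType d)
        (P : probability T R).
Context (K : comNzRingType) (Kmeas : (T -> K) -> Prop) (Knorm : K -> R)
        (emb : R -> K).
Hypothesis KnormM : forall a b, Knorm (a * b) = Knorm a * Knorm b.
Hypothesis KnormD : forall a b, Knorm (a + b) <= Knorm a + Knorm b.
Hypothesis Knorm0 : Knorm 0 = 0.
Hypothesis Knorm_ge0 : forall a, 0 <= Knorm a.
Hypothesis Knorm_emb : forall r, Knorm (emb r) = `|r|.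
Hypothesis Kmeas_emb : forall g : T -> R, measurable_fun setT g ->
  Kmeas (fun w => emb (g w)).
Hypothesis measurable_Knorm : forall xi, Kmeas xi ->
  measurable_fun setT (fun w => Knorm (xi w)).
Hypothesis measurable_KnormB : forall xi zeta, Kmeas xi -> Kmeas zeta ->
  measurable_fun setT (fun w => Knorm (xi w - zeta w)).

Lemma measurable_Knorm_lt xi (c : R) : Kmeas xi ->
  measurable [set w | Knorm (xi w) < c].
Proof.
by move=> mxi; apply: measurable_set_ltr (measurable_Knorm mxi) (measurable_cst _).
Qed.

(* The constraint e0 < 1 is what separates this neighbourhood of 0 from the
   random variables of modulus 1 on a large event. *)
Definition small_in_prob (lam : R) (xi : T -> K) : Prop := Kmeas xi /\
  exists e0 : R, 0 < e0 < 1 /\ lte_prob P (1 - lam) [set w | Knorm (xi w) < e0].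

Lemma small_in_prob_open lam : 0 < lam < 1 ->
  L0_el_open P Kmeas Knorm (small_in_prob lam).
Proof.
case/andP=> lam_gt0 lam_lt1 xi mxi [_ [e0 [/andP[e0_gt0 e0_lt1]]]].
have mS0 := measurable_Knorm_lt e0 mxi.
rewrite lte_probP // => prS0; have := pr_le1 P mS0.
exists ((1 - e0) / 2); split; first lra.
exists (pr P [set w | Knorm (xi w) < e0] - (1 - lam)).
split; first by apply/andP; split; lra.
move=> eta meta.
have mS1 : measurable [set w | Knorm (eta w - xi w) < (1 - e0) / 2].
  exact: measurable_set_ltr (measurable_KnormB meta mxi) (measurable_cst _).
rewrite lte_probP // => prS1.
split => //; exists ((1 + e0) / 2); split; first by apply/andP; split; lra.
have mS2 := measurable_Knorm_lt ((1 + e0) / 2) meta.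
have sub : [set w | Knorm (xi w) < e0] `&` [set w | Knorm (eta w - xi w) < (1 - e0) / 2]
    `<=` [set w | Knorm (eta w) < (1 + e0) / 2].
  move=> w [/= S0w S1w]; rewrite -(subrK (xi w) (eta w)).
  by apply: le_lt_trans (KnormD _ _) _; lra.
rewrite lte_probP //; have := prI P mS0 mS1.
by have := pr_le P (measurableI _ _ mS0 mS1) mS2 sub; lra.
Qed.

Section Module.
Context (E : zmodType) (sc : (T -> K) -> E -> E) (Pf : set (E -> T -> R)).
Hypothesis hRLC : RLC_module P Kmeas Knorm sc Pf.
Implicit Types (p : E -> T -> R) (Q : seq (E -> T -> R)) (x y z : E).

Lemma finite_subfamily_cons p Q :
  finite_subfamily Pf (p :: Q) -> Pf p /\ finite_subfamily Pf Q.
Proof. by move=> PQ; split; [apply: PQ; left | move=> q Qq; apply: PQ; right]. Qed.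

Lemma normQ_cons p Q x w : normQ (p :: Q) x w = Num.max (p x w) (normQ Q x w).
Proof. by rewrite /normQ big_cons. Qed.

Lemma measurable_normQ Q x : finite_subfamily Pf Q -> measurable_fun setT (normQ Q x).
Proof.
elim: Q => [|p Q IHQ] PQ.
  rewrite (_ : normQ _ x = fun _ => 0); first exact: measurable_cst.
  by apply/funext => w; rewrite /normQ big_nil.
have [Pp PQ'] := finite_subfamily_cons PQ.
rewrite (_ : normQ _ x = fun w => Num.max (p x w) (normQ Q x w)).
  exact: measurable_maxr (sn_meas (rlc_seminorms hRLC Pp) x) (IHQ PQ').
by apply/funext => w; rewrite normQ_cons.
Qed.

Lemma measurable_normQ_lt Q x c : finite_subfamily Pf Q ->
  measurable [set w | normQ Q x w < c].
Proof.
by move=> PQ; apply: measurable_set_ltr (measurable_normQ x PQ) (measurable_cst _).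
Qed.

Lemma normQ_scale_ae Q xi x : finite_subfamily Pf Q -> Kmeas xi ->
  {ae P, forall w, normQ Q (sc xi x) w = Knorm (xi w) * normQ Q x w}.
Proof.
move=> + mxi; elim: Q => [|p Q IHQ] PQ.
  by apply: nearW => w; rewrite /normQ !big_nil mulr0.
have [Pp PQ'] := finite_subfamily_cons PQ.
apply: filterS2 (sn_hom (rlc_seminorms hRLC Pp) x mxi) (IHQ PQ') => w e1 e2.
by rewrite !normQ_cons e1 e2 maxr_pMr.
Qed.

Lemma el_open_c_open (G : set E) : el_open P Pf G -> c_open P Pf G.
Proof.
move=> openG x Gx; have [Q [PQ [eps [eps_gt0 [lam [lam01 Gball]]]]]] := openG x Gx.
exists Q; split => //; exists (fun _ => eps / 2); split; first exact: measurable_cst.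
split; first by apply: nearW => w; rewrite divr_gt0.
move=> y yx_le; apply: Gball; rewrite lte_probP; last exact: measurable_normQ_lt.
rewrite pr_ae1; last 2 first.
- exact: measurable_normQ_lt.
- by apply: filterS yx_le => w /le_lt_trans; apply; lra.
by case/andP: lam01 => lam_gt0 _; lra.
Qed.

Section Homomorphism.
Variable f : E -> T -> K.
Hypothesis hf : L0_module_hom P Kmeas sc f.

Let mf x : Kmeas (f x) := hf.1 x.

Lemma hom0_ae : {ae P, forall w, f 0 w = 0}.
Proof.
have := hf.2.1 0 0; rewrite addr0 /aeqK; apply: filterS => w f0w.
by have := congr1 (fun t => t - f 0 w) f0w; rewrite addrK subrr => <-.
Qed.

Lemma homB_ae x y : {ae P, forall w, f (y - x) w = f y w - f x w}.
Proof.
by have := hf.2.1 (y - x) x; rewrite subrK /aeqK; apply: filterS => w ->; rewrite addrK.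
Qed.

Lemma hom0_small_in_prob lam : 0 < lam -> small_in_prob lam (f 0).
Proof.
move=> lam_gt0; split => //; exists (1 / 2); split; first by apply/andP; split; lra.
rewrite lte_probP; last exact: measurable_Knorm_lt.
rewrite pr_ae1; [lra | exact: measurable_Knorm_lt |].
by apply: filterS hom0_ae => w /= ->; rewrite Knorm0; lra.
Qed.

Section Ball.
Variables (Q : seq (E -> T -> R)) (eta : T -> R).
Hypotheses (PQ : finite_subfamily Pf Q) (meta : measurable_fun setT eta).

Definition dominated (z : E) : set T :=
  [set w | 0 < Knorm (f z w)] `&` [set w | normQ Q z w <= Knorm (f z w) * eta w].

Lemma measurable_dominated z : measurable (dominated z).
Proof.
apply: measurableI.
  exact: measurable_set_ltr (measurable_cst (0 : R)) (measurable_Knorm (mf z)).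
apply: measurable_set_ler (measurable_normQ z PQ) _.
exact: measurable_funM (measurable_Knorm (mf z)) meta.
Qed.

Definition normalizer (z : E) : T -> K :=
  fun w => emb (\1_(dominated z) w * (Knorm (f z w))^-1).

Lemma Kmeas_normalizer z : Kmeas (normalizer z).
Proof.
apply/Kmeas_emb/measurable_funM; first exact/measurable_indic/measurable_dominated.
exact: measurable_funV_ge0 (measurable_Knorm (mf z)) _.
Qed.

Lemma normQ_normalizer_le z : {ae P, forall w, 0 < eta w} ->
  {ae P, forall w, normQ Q (sc (normalizer z) z) w <= eta w}.
Proof.
move=> eta_gt0.
apply: filterS2 (normQ_scale_ae z PQ (Kmeas_normalizer z)) eta_gt0 => w -> etaw.
rewrite Knorm_emb indicE; have [[/= fz_gt0 le_eta]|nBw] := pselect (dominated z w).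
  rewrite mem_set // mul1r ger0_norm ?invr_ge0 ?Knorm_ge0 //.
  by rewrite ler_pdivrMl.
by rewrite memNset //= mul0r normr0 mul0r ltW.
Qed.

Lemma Knorm_hom_normalizer z :
  {ae P, forall w, dominated z w -> Knorm (f (sc (normalizer z) z) w) = 1}.
Proof.
apply: filterS (hf.2.2 _ z (Kmeas_normalizer z)) => w -> Dw.
rewrite KnormM Knorm_emb indicE mem_set // mul1r; case: Dw => /= fz_gt0 _.
by rewrite ger0_norm ?invr_ge0 ?Knorm_ge0 // mulVf ?gt_eqF.
Qed.

Lemma pr_dominated_lt lam : {ae P, forall w, 0 < eta w} ->
  (forall y, {ae P, forall w, normQ Q y w <= eta w} -> small_in_prob lam (f y)) ->
  forall z, pr P (dominated z) < lam.
Proof.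
move=> eta_gt0 ball_small z.
have [_ [e0 [/andP[_ e0_lt1]]]] := ball_small _ (normQ_normalizer_le z eta_gt0).
have mS := measurable_Knorm_lt e0 (mf (sc (normalizer z) z)).
rewrite lte_probP // => prS.
have : pr P [set w | Knorm (f (sc (normalizer z) z) w) < e0] <= pr P (~` dominated z).
  apply: pr_le_ae mS (measurableC (measurable_dominated z)) _.
  by apply: filterS (Knorm_hom_normalizer z) => w norm1 /= lt_e0 /norm1 eq1; lra.
by rewrite prC //; [lra | exact: measurable_dominated].
Qed.

(* Off the dominated event, |f z| >= e forces ||z||_Q >= e delta or eta < delta. *)
Lemma pr_Knorm_hom_gt z (e delta c : R) : 0 < e -> 0 < delta ->
  pr P [set w | eta w < delta] <= c -> pr P (dominated z) < c ->
  1 - c < pr P [set w | normQ Q z w < e * delta] ->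
  1 - 3 * c < pr P [set w | Knorm (f z w) < e].
Proof.
move=> e_gt0 delta_gt0 pr_eta pr_dom pr_normQ.
have mS := measurable_Knorm_lt e (mf z).
have mN := measurable_normQ_lt z (e * delta) PQ.
have mD := measurable_dominated z.
have mH : measurable [set w | eta w < delta].
  exact: measurable_set_ltr meta (measurable_cst _).
have sub : ~` [set w | Knorm (f z w) < e] `<=`
    dominated z `|` (~` [set w | normQ Q z w < e * delta] `|` [set w | eta w < delta]).
  move=> w /= /negP; rewrite -leNgt => e_le.
  have [Dw|nDw] := pselect (dominated z w); [by left | right].
  have [|eta_ge] := ltP (eta w) delta; [by right | left => normQ_lt].
  apply: nDw; split => /=; first exact: lt_le_trans e_gt0 e_le.
  by apply: le_trans (ltW normQ_lt) _; apply: ler_pM => //; apply: ltW.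
have := pr_le P (measurableC mS) (measurableU _ _ mD (measurableU _ _ (measurableC mN) mH)) sub.
have := prU P mD (measurableU _ _ (measurableC mN) mH).
have := prU P (measurableC mN) mH.
by rewrite !prC //; lra.
Qed.

End Ball.

Lemma cont_c_el : cont_c P Kmeas Knorm Pf f -> cont_el P Kmeas Knorm Pf f.
Proof.
move=> contc G openG x0 Gx0.
have [e [e_gt0 [lam [/andP[lam_gt0 lam_lt1] Gball]]]] := openG _ (mf x0) Gx0.
have lam4_gt0 : 0 < lam / 4 by lra.
have lam4 : 0 < lam / 4 < 1 by apply/andP; split; lra.
have [Q [PQ [eta [meta [eta_gt0 ball_small]]]]] :=
  contc _ (small_in_prob_open lam4) 0 (hom0_small_in_prob lam4_gt0).
have {}ball_small y : {ae P, forall w, normQ Q y w <= eta w} -> small_in_prob (lam / 4) (f y).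
  by have := ball_small y; rewrite subr0.
have [delta [delta_gt0 pr_eta]] := exists_pr_lt_small meta eta_gt0 lam4_gt0.
exists Q; split => //; exists (e * delta); split; first exact: mulr_gt0.
exists (lam / 4); split => // y.
rewrite lte_probP; last exact: measurable_normQ_lt.
move=> pr_normQ.
apply: Gball (mf y) _; rewrite lte_probP; last first.
  exact: measurable_set_ltr (measurable_KnormB (mf y) (mf x0)) (measurable_cst _).
have := pr_Knorm_hom_gt PQ meta e_gt0 delta_gt0 pr_eta
  (pr_dominated_lt PQ meta eta_gt0 ball_small (y - x0)) pr_normQ.
have : pr P [set w | Knorm (f (y - x0) w) < e] <=
       pr P [set w | Knorm (f y w - f x0 w) < e].
  apply: pr_le_ae; [exact: measurable_Knorm_lt |
    exact: measurable_set_ltr (measurable_KnormB (mf y) (mf x0)) (measurable_cst _) |].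
  by apply: filterS (homB_ae x0 y) => w /= ->.
lra.
Qed.

End Homomorphism.

Lemma cont_c_iff_el f : L0_module_hom P Kmeas sc f ->
  cont_c P Kmeas Knorm Pf f <-> cont_el P Kmeas Knorm Pf f.
Proof.
move=> hf; split; first exact: cont_c_el.
by move=> contel G openG; apply: el_open_c_open; exact: contel.
Qed.

End Module.

Lemma dual_equality : dual_equality_statement P Kmeas Knorm.
Proof. by move=> E sc Pf hRLC f; exact: cont_c_iff_el. Qed.

End Duality.

Lemma absC_normc (R : realType) (z : R[i]) : absC z = ComplexField.Normc.normc z.
Proof. by case: z. Qed.

Theorem theorem1p1 (R : realType) (d : measure_display) (T : measurableType d)
    (P : probability T R) :
  dual_equality_statement P (K := R) (@measR R d T) (fun x : R => `|x|%R) /\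
  dual_equality_statement P (K := R[i]) (@measC R d T) (@absC R).
Proof.
split.
- apply: (@dual_equality _ _ _ _ _ _ _ id) => //.
  + exact: normrM.
  + exact: ler_normD.
  + by rewrite normr0.
  + by move=> xi mxi; exact: measurableT_comp mxi.
  + by move=> xi zeta mxi mzeta; apply: measurableT_comp => //; exact: measurable_funB.
- apply: (@dual_equality _ _ _ _ _ _ _ (fun r => r%:C%C)) => //.
  + by move=> a b; rewrite !absC_normc ComplexField.Normc.normcM.
  + by move=> a b; rewrite !absC_normc le_normcD.
  + by rewrite absC_normc ComplexField.Normc.normc0.
  + by move=> a; rewrite /absC sqrtr_ge0.
  + by move=> r; rewrite /absC /= expr0n /= addr0 sqrtr_sqr.
  + by move=> xi [mre mim]; exact: measurable_sqrt_sum_sqr.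
  + move=> xi zeta [mre mim] [mre' mim'].
    rewrite (_ : (fun w => absC _) = fun w => Num.sqrt
      ((complex.Re (xi w) - complex.Re (zeta w)) ^+ 2 +
       (complex.Im (xi w) - complex.Im (zeta w)) ^+ 2)).
      by apply: measurable_sqrt_sum_sqr; apply: measurable_funB.
    by apply/funext => w; rewrite /absC; case: (xi w); case: (zeta w).
Qed.
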